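(* For every $\epsilon,\alpha,D,L,A>0$ there exist $\eta,\beta>0$ such that if $X$ and $Y$ are connected graphs with degree bounded by $D$, $X$ has no $\alpha$-small $\epsilon$-Følner set and $f\colon X\to Y$ is an $(L,A)$-quasi-isometry, then $Y$ has no $\beta$-small $\eta$-Følner set.
   Context: Graphs are finite, with no multiple edges nor loops, viewed as metric spaces with the path-length metric. For $S\subseteq X$, $\partial S$ is the set of edges joining $S$ to $X\smallsetminus S$. A non-empty $S\subset X$ is an $\epsilon$-Følner set if $|S|\leq\frac12|X|$ and $|\partial S|\leq\epsilon|S|$; it is $\alpha$-small if $|S|<\alpha|X|$. An $(L,A)$-quasi-isometry is a map $f$ with $\frac1L d_X(x,x')-A\leq d_Y(f(x),f(x'))\leq L d_X(x,x')+A$ and every point of $Y$ within distance $A$ of $f(X)$. *)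

From mathcomp Require Import all_boot all_order all_algebra.
From mathcomp Require Import reals.
Set Implicit Arguments. Unset Strict Implicit. Unset Printing Implicit Defensive.
Import Order.TTheory GRing.Theory Num.Theory.
Local Open Scope ring_scope.

Definition simple_graph (T : finType) (e : rel T) : Prop :=
  symmetric e /\ irreflexive e.

Definition connected_graph (T : finType) (e : rel T) : Prop :=
  forall x y : T, connect e x y.

Definition deg_bounded (R : realType) (T : finType) (e : rel T) (D : R) : Prop :=
  forall x : T, (#|[set y | e x y]|%:R <= D).

(* path-length metric: least n such that there is a walk with n edges from x
   to y (searched among n <= #|T|, which suffices in a connected graph). *)
Definition gdist (T : finType) (e : rel T) (x y : T) : nat :=
  find (fun n => [exists p : n.-tuple T, path e x p && (last x p == y)])
       (iota 0 #|T|.+1).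

Definition edge_boundary (T : finType) (e : rel T) (S : {set T}) : {set T * T} :=
  [set p : T * T | e p.1 p.2 && (p.1 \in S) && (p.2 \notin S)].

Definition folner (R : realType) (T : finType) (e : rel T) (eps : R) (S : {set T}) : Prop :=
  S != set0 /\ (#|S|%:R <= #|T|%:R / 2 :> R) /\
  (#|edge_boundary e S|%:R <= eps * #|S|%:R).

Definition small (R : realType) (T : finType) (alpha : R) (S : {set T}) : Prop :=
  #|S|%:R < alpha * #|T|%:R.

Definition quasi_isometry (R : realType) (X Y : finType) (eX : rel X) (eY : rel Y)
  (L A : R) (f : X -> Y) : Prop :=
  (forall x x' : X,
      (gdist eX x x')%:R / L - A <= (gdist eY (f x) (f x'))%:R /\
      (gdist eY (f x) (f x'))%:R <= L * (gdist eX x x')%:R + A) /\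
  (forall y : Y, exists x : X, (gdist eY y (f x))%:R <= A).

From mathcomp Require Import all_boot all_order all_algebra.
From mathcomp Require Import reals ring lra.
Import Order.TTheory GRing.Theory Num.Theory.
Set Implicit Arguments. Unset Strict Implicit. Unset Printing Implicit Defensive.

(* Pull a small Følner set S of Y back to T := f @^-1: S.  Bounded degree bounds
   the size of balls of fixed radius by a constant K, which turns every coarse
   estimate into a multiplicative one: the fibres of f have at most K points
   (|T| <= K |S|); a boundary edge of T is mapped close to a boundary edge of S,
   and boundedly many edges of X are close to a given one (|dT| <= K^2 |dS|);
   S is covered by the balls around f(T) and around dS (|S| <= K (|T| + |dS|));
   and |Y| <= K |X|.  So if |dS| is a small enough fraction of |S|, then T is
   nonempty, |dT| <= eps |T|, and T is small in X. *)

Section Walks.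
Variables (T : finType) (e : rel T).

Inductive walk : T -> T -> nat -> Prop :=
| walk0 x : walk x x 0
| walkS x y z n : e x y -> walk y z n -> walk x z n.+1.

Lemma walkP x y n :
  walk x y n <-> exists p : seq T, [/\ size p = n, path e x p & last x p = y].
Proof.
split.
  elim=> [z|a b c k eab _ [p [<- pp <-]]]; first by exists [::].
  by exists (b :: p); rewrite /= eab pp.
elim: n x => [|n IH] x [[|b p] [//= sp pp lp]]; first by rewrite -lp; constructor.
case/andP: pp => exb pp; apply: (walkS exb); apply: IH.
by exists p; case: sp.
Qed.

Lemma walk_cat x y z n m : walk x y n -> walk y z m -> walk x z (n + m).
Proof. by elim=> // a b c k eab _ IH /IH; apply: walkS. Qed.

Lemma walk_rcons x y z n : walk x y n -> e y z -> walk x z n.+1.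
Proof.
by move=> w eyz; rewrite -addn1; apply: (walk_cat w); apply: (walkS eyz); constructor.
Qed.

Lemma walk_connect x y n : walk x y n -> connect e x y.
Proof. by case/walkP=> p [_ pp <-]; apply/connectP; exists p. Qed.

Lemma walk_exit (S : {set T}) x y n : walk x y n -> x \in S -> y \notin S ->
  exists p k, [/\ p \in edge_boundary e S, (k <= n)%N & walk x p.1 k].
Proof.
elim=> [a -> //|a b c k eab w IH aS cS].
case bS: (b \in S).
  have [p [j [pS jk wbp]]] := IH bS cS.
  by exists p, j.+1; split=> //; apply: (walkS eab).
by exists (a, b), 0; split=> //; [rewrite inE /= eab aS bS | constructor].
Qed.

Definition walkb x y n := [exists p : n.-tuple T, path e x p && (last x p == y)].

Lemma walkbP x y n : reflect (walk x y n) (walkb x y n).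
Proof.
apply: (iffP existsP) => [[p /andP[pp /eqP lp]]|/walkP[p [sp pp lp]]].
  by apply/walkP; exists p; rewrite size_tuple.
have sp' : size p == n by apply/eqP.
by exists (Tuple sp'); rewrite /= pp lp eqxx.
Qed.

Lemma gdistE x y : gdist e x y = find (walkb x y) (iota 0 #|T|.+1).
Proof. by []. Qed.

(* A shortest walk visits no vertex twice, so it has at most #|T| edges. *)
Lemma has_walkb x y : connect e x y -> has (walkb x y) (iota 0 #|T|.+1).
Proof.
case/connectP=> p pp ->; case: (shortenP pp) => p' pp' up' _.
apply/hasP; exists (size p').
  rewrite mem_iota add0n ltnS.
  by have := max_card (mem (x :: p')); rewrite (card_uniqP up') => /ltnW.
by apply/walkbP/walkP; exists p'.
Qed.

Lemma gdist_walk x y : connect e x y -> walk x y (gdist e x y).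
Proof.
move/has_walkb=> h; apply/walkbP; rewrite gdistE.
have := nth_find 0 h; rewrite nth_iota //.
by move: h; rewrite has_find size_iota.
Qed.

Lemma gdist_min x y n : walk x y n -> (gdist e x y <= n)%N.
Proof.
move=> w; have h := has_walkb (walk_connect w).
rewrite leqNgt; apply/negP => lt.
have nT : (n < #|T|.+1)%N by rewrite has_find size_iota in h; apply: ltn_trans lt h.
by have := before_find 0 lt; rewrite nth_iota // add0n => /walkbP.
Qed.

Lemma gdist_refl x : gdist e x x = 0%N.
Proof. by apply/eqP; rewrite -leqn0 gdist_min //; constructor. Qed.

Lemma gdist_eq0 x y : connect e x y -> gdist e x y = 0%N -> x = y.
Proof. by move/gdist_walk=> + h; rewrite h; inversion 1. Qed.

Lemma gdist_edge x y : e x y -> (gdist e x y <= 1)%N.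
Proof. by move=> exy; apply: gdist_min; apply: (walkS exy); constructor. Qed.

Hypothesis conn : connected_graph e.

Lemma gdist_leP x y r :
  reflect (exists2 k, (k <= r)%N & walk x y k) (gdist e x y <= r)%N.
Proof.
apply: (iffP idP) => [le_r|[k kr /gdist_min le_k]]; last exact: leq_trans le_k kr.
by exists (gdist e x y) => //; apply: gdist_walk.
Qed.

Lemma gdist_triangle x y z : (gdist e x z <= gdist e x y + gdist e y z)%N.
Proof. by apply: gdist_min; apply: walk_cat; apply: gdist_walk. Qed.

Hypothesis esym : symmetric e.

Lemma walk_sym x y n : walk x y n -> walk y x n.
Proof.
elim=> [a|a b c k eab _ IH]; first by constructor.
by apply: (walk_rcons IH); rewrite esym.
Qed.

Lemma gdist_sym x y : gdist e x y = gdist e y x.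
Proof.
by apply/eqP; rewrite eqn_leq !gdist_min //; apply: walk_sym; apply: gdist_walk.
Qed.

End Walks.

Lemma card_bigcup_le (I T : finType) (P : {pred I}) (B : I -> {set T}) :
  (#|\bigcup_(i in P) B i| <= \sum_(i in P) #|B i|)%N.
Proof.
elim/big_ind2: _ => [|A n C k leA leC|]; rewrite ?cards0 //.
by apply: leq_trans (leq_card_setU _ _) _; apply: leq_add.
Qed.

Lemma card_le_cover (I T : finType) (P : {pred I}) (B : I -> {set T}) (A : {set T}) K :
  A \subset \bigcup_(i in P) B i -> (forall i, i \in P -> #|B i| <= K)%N ->
  (#|A| <= #|P| * K)%N.
Proof.
move=> sAB leBK; apply: leq_trans (subset_leq_card sAB) _.
apply: leq_trans (card_bigcup_le _ _) _.
by rewrite -sum_nat_const; apply: leq_sum.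
Qed.

Section Balls.
Variables (T : finType) (e : rel T) (Dn : nat).
Hypotheses (esym : symmetric e) (conn : connected_graph e).
Hypothesis deg : forall x, (#|[set y | e x y]| <= Dn)%N.

Definition ball r c := [set y | (gdist e c y <= r)%N].

Lemma ball0 c : ball 0 c = [set c].
Proof.
apply/setP=> y; rewrite !inE leqn0.
by apply/eqP/eqP => [/gdist_eq0 -> // | ->]; rewrite gdist_refl.
Qed.

Lemma ballS_sub r c :
  ball r.+1 c \subset ball r c :|: \bigcup_(z in ball r c) [set y | e z y].
Proof.
apply/subsetP=> y; rewrite !inE => /(gdist_leP conn)[k le_kr w].
have [le_kr' | lt_rk] := leqP k r.
  by apply/orP; left; apply/(gdist_leP conn); exists k.
have /eqP k_eq : k == r.+1 by rewrite eqn_leq le_kr lt_rk.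
move: w; rewrite k_eq => /(walk_sym esym) w; inversion w as [|u z v n eyz wz]; subst.
apply/orP; right; apply/bigcupP; exists z; last by rewrite inE esym.
by rewrite inE; apply/(gdist_leP conn); exists r => //; apply: walk_sym.
Qed.

Lemma card_ball r c : (#|ball r c| <= Dn.+1 ^ r)%N.
Proof.
elim: r => [|r IH]; first by rewrite ball0 cards1.
apply: leq_trans (subset_leq_card (ballS_sub r c)) _.
apply: leq_trans (leq_card_setU _ _) _.
apply: leq_trans (leq_add (leqnn _) (card_le_cover (subxx _) (fun z _ => deg z))) _.
by rewrite -mulnS expnSr leq_mul2r IH orbT.
Qed.

Lemma card_ball_le r R c : (r <= R)%N -> (#|ball r c| <= Dn.+1 ^ R)%N.
Proof. by move=> le_rR; apply: leq_trans (card_ball r c) _; apply: leq_pexp2l. Qed.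

End Balls.

Definition ball_bound (Dn r a : nat) := (Dn.+1 ^ maxn r.+1 a)%N.

Section CoarseEmbedding.
Variables (X Y : finType) (eX : rel X) (eY : rel Y) (f : X -> Y) (Dn m r a : nat).
Hypotheses (symX : symmetric eX) (symY : symmetric eY).
Hypotheses (connX : connected_graph eX) (connY : connected_graph eY).
Hypotheses (degX : forall x, (#|[set x' | eX x x']| <= Dn)%N)
           (degY : forall y, (#|[set y' | eY y y']| <= Dn)%N).
Hypothesis f_edge : forall x x', eX x x' -> (gdist eY (f x) (f x') <= m)%N.
Hypothesis f_proper :
  forall x x', (gdist eY (f x) (f x') <= m.*2)%N -> (gdist eX x x' <= r)%N.
Hypothesis f_dense : forall y, exists x, (gdist eY y (f x) <= a)%N.

Let K := ball_bound Dn r a.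

Lemma preimage_ball_sub y x0 :
  f x0 \in ball eY m y -> f @^-1: ball eY m y \subset ball eX r x0.
Proof.
rewrite inE => le_x0; apply/subsetP=> x; rewrite !inE => le_x; apply: f_proper.
apply: leq_trans (gdist_triangle connY _ y _) _.
by rewrite (gdist_sym connY symY) -addnn leq_add.
Qed.

Lemma card_preimage_ball y : (#|f @^-1: ball eY m y| <= Dn.+1 ^ r)%N.
Proof.
have [-> | [x0 x0_in]] := set_0Vmem (f @^-1: ball eY m y); first by rewrite cards0.
rewrite inE in x0_in.
exact: leq_trans (subset_leq_card (preimage_ball_sub x0_in)) (card_ball symX connX degX _ _).
Qed.

Lemma card_codomain : (#|Y| <= #|X| * K)%N.
Proof.
rewrite -cardsT -(cardsT X); apply: (card_le_cover (B := fun x => ball eY a (f x))).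
  apply/subsetP=> y _; have [x le_a] := f_dense y; apply/bigcupP; exists x => //.
  by rewrite inE (gdist_sym connY symY).
by move=> x _; apply: card_ball_le => //; rewrite leq_maxr.
Qed.

Variable S : {set Y}.
Let T := f @^-1: S.

Lemma card_preimage : (#|T| <= #|S| * K)%N.
Proof.
apply: (card_le_cover (B := fun y => f @^-1: ball eY m y)).
  apply/subsetP=> x; rewrite inE => fxS; apply/bigcupP; exists (f x) => //.
  by rewrite !inE gdist_refl.
move=> y _; apply: leq_trans (card_preimage_ball y) _.
by apply: leq_pexp2l => //; apply: leq_trans (leqnSn r) (leq_maxl _ _).
Qed.

Lemma card_le_preimage_boundary : (#|S| <= (#|T| + #|edge_boundary eY S|) * K)%N.
Proof.
have cover : S \subset (\bigcup_(x in T) ball eY a (f x)) :|: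
                       (\bigcup_(p in edge_boundary eY S) ball eY a p.1).
  apply/subsetP=> y yS; have [x le_a] := f_dense y.
  have [fxS | fxNS] := boolP (f x \in S).
    apply/setUP; left; apply/bigcupP; exists x; first by rewrite inE.
    by rewrite inE (gdist_sym connY symY).
  have [k kle_a w] := gdist_leP connY _ _ _ le_a.
  have [p [k' [pS le_k' w']]] := walk_exit w yS fxNS.
  apply/setUP; right; apply/bigcupP; exists p => //.
  rewrite inE; apply/(gdist_leP connY); exists k'; first exact: leq_trans le_k' kle_a.
  exact: walk_sym.
apply: leq_trans (subset_leq_card cover) _; apply: leq_trans (leq_card_setU _ _) _.
have ball_a z : (#|ball eY a z| <= K)%N by apply: card_ball_le => //; rewrite leq_maxr.
by rewrite mulnDl; apply: leq_add; apply: card_le_cover (subxx _) _ => ? _.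
Qed.

Lemma card_boundary_preimage :
  (#|edge_boundary eX T| <= #|edge_boundary eY S| * (K * K))%N.
Proof.
pose P (p : Y * Y) := [set q in edge_boundary eX T | f q.1 \in ball eY m p.1].
apply: (card_le_cover (B := P)).
  apply/subsetP=> q qT; have := qT; rewrite !inE => /andP[/andP[eq q1T] q2T].
  have [k le_km w] := gdist_leP connY _ _ _ (f_edge eq).
  have [p [j [pS le_jk w']]] := walk_exit w q1T q2T.
  apply/bigcupP; exists p; rewrite // inE qT inE.
  apply/(gdist_leP connY); exists j; first exact: leq_trans le_jk le_km.
  exact: walk_sym.
move=> p _; have [-> | [q0 q0P]] := set_0Vmem (P p); first by rewrite cards0.
have sub : P p \subset setX (ball eX r.+1 q0.1) (ball eX r.+1 q0.1).
  have fq0 : f q0.1 \in ball eY m p.1 by move: q0P; rewrite inE => /andP[].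
  apply/subsetP=> q; rewrite inE => /andP[qT fq].
  have : q.1 \in ball eX r q0.1.
    by apply: (subsetP (preimage_ball_sub fq0)); rewrite inE.
  move: qT; rewrite !inE => /andP[/andP[eq _] _] le_q.
  rewrite (leq_trans le_q) //=; apply: leq_trans (gdist_triangle connX _ q.1 _) _.
  by rewrite -addn1 leq_add // gdist_edge.
apply: leq_trans (subset_leq_card sub) _; rewrite cardsX.
by apply: leq_mul; apply: card_ball_le; rewrite ?leq_maxl.
Qed.

Local Open Scope ring_scope.
Variables (R : realType) (eps alpha eta beta : R).
Let k : R := K%:R.
Hypotheses (eta_ge0 : 0 <= eta) (beta_ge0 : 0 <= beta).
Hypotheses (eta_eps : 2 * k ^+ 3 * eta <= eps) (eta_le1 : 2 * k ^+ 3 * eta <= 1).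
Hypotheses (beta_alpha : k ^+ 2 * beta <= alpha) (beta_half : k ^+ 2 * beta <= 1 / 2).

Lemma folner_preimage :
  small beta S /\ folner eY eta S -> small alpha T /\ folner eX eps T.
Proof.
rewrite /small /folner => -[S_small [S_ne [_ S_bd]]].
set s : R := #|S|%:R in S_small S_bd *; set t : R := #|T|%:R.
set bS : R := #|edge_boundary eY S|%:R in S_bd *; set bT : R := #|edge_boundary eX T|%:R.
have k_ge1 : 1 <= k by rewrite ler1n expn_gt0.
have k_gt0 : 0 < k by lra.
have s_gt0 : 0 < s by rewrite ltr0n card_gt0.
have T_le : t <= s * k by rewrite -natrM ler_nat card_preimage.
have S_le : s <= (t + bS) * k.
  by rewrite -natrD -natrM ler_nat card_le_preimage_boundary.
have bT_le : bT <= bS * k ^+ 2 by rewrite -natrX -natrM ler_nat -mulnn card_boundary_preimage.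
have Y_le : #|Y|%:R <= #|X|%:R * k :> R by rewrite -natrM ler_nat card_codomain.
have k_eta : 2 * k * eta <= 1.
  by apply: le_trans eta_le1; rewrite ler_wpM2r // ler_wpM2l // ler_eXnr.
have bS_half : k * bS <= s / 2 by nra.
have S_le_T : s <= 2 * k * t by nra.
have t_gt0 : 0 < t by nra.
have bT_small : bT <= eps * t.
  have : bT <= eta * (2 * k * t) * k ^+ 2.
    apply: le_trans bT_le _; rewrite ler_pM2r ?exprn_gt0 //.
    by apply: le_trans S_bd _; rewrite ler_wpM2l.
  have -> : eta * (2 * k * t) * k ^+ 2 = 2 * k ^+ 3 * eta * t by rewrite exprS; ring.
  by move/le_trans; apply; rewrite ler_pM2r.
have t_lt : t < k ^+ 2 * beta * #|X|%:R.
  have : t < beta * #|X|%:R * k * k.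
    apply: le_lt_trans T_le _; rewrite ltr_pM2r //.
    by apply: lt_le_trans S_small _; rewrite -mulrA ler_wpM2l.
  by have -> : beta * #|X|%:R * k * k = k ^+ 2 * beta * #|X|%:R by ring.
have X_ge0 : 0 <= #|X|%:R :> R := ler0n _ _.
move: t_lt beta_alpha beta_half; set c := k ^+ 2 * beta => t_lt c_alpha c_half.
split; first by nra.
split; first by rewrite -card_gt0 -(ltr0n R).
by split; nra.
Qed.

End CoarseEmbedding.

Local Open Scope ring_scope.

Lemma leq_truncn (R : archiNumDomainType) (x : R) n : n%:R <= x -> (n <= Num.truncn x)%N.
Proof. by move=> le_nx; rewrite truncn_ge_nat // (le_trans _ le_nx). Qed.

Lemma exists_pos_mul_le (R : realFieldType) (c a b : R) :
  0 < c -> 0 < a -> 0 < b -> exists2 x, 0 < x & c * x <= a /\ c * x <= b.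
Proof.
move=> c_gt0 a_gt0 b_gt0; exists (Num.min a b / c).
  by rewrite divr_gt0 // lt_min a_gt0.
by rewrite mulrC divfK ?gt_eqF // !ge_min !lexx orbT.
Qed.

Definition qi_edge_bound (R : archiNumDomainType) (L A : R) := Num.truncn (L + A).
Definition qi_fibre_radius (R : archiNumDomainType) (L A : R) :=
  Num.truncn (L * ((qi_edge_bound L A).*2%:R + A)).

Section QuasiIsometry.
Variables (R : realType) (X Y : finType) (eX : rel X) (eY : rel Y) (L A : R) (f : X -> Y).
Hypotheses (L_gt0 : 0 < L) (qi : quasi_isometry eX eY L A f).

Lemma qi_edge x x' : eX x x' -> (gdist eY (f x) (f x') <= qi_edge_bound L A)%N.
Proof.
move=> exx'; apply: leq_truncn; have [_ le_dY] := qi.1 x x'.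
by apply: le_trans le_dY _; rewrite lerD2r ler_piMr ?(ltW L_gt0) // lern1 gdist_edge.
Qed.

Lemma qi_proper x x' : (gdist eY (f x) (f x') <= (qi_edge_bound L A).*2)%N ->
  (gdist eX x x' <= qi_fibre_radius L A)%N.
Proof.
rewrite -(ler_nat R) => le_dY; apply: leq_truncn; have [ge_dY _] := qi.1 x x'.
by rewrite mulrC -ler_pdivrMr // -lerBlDr (le_trans ge_dY).
Qed.

Lemma qi_dense y : exists x, (gdist eY y (f x) <= Num.truncn A)%N.
Proof. by have [x le_dY] := qi.2 y; exists x; apply: leq_truncn. Qed.

End QuasiIsometry.

Unset Implicit Arguments.

Theorem proposition2p6 (R : realType) (eps alpha D L A : R) :
  0 < eps -> 0 < alpha -> 0 < D -> 0 < L -> 0 < A ->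
  exists eta beta : R, 0 < eta /\ 0 < beta /\
    forall (X Y : finType) (eX : rel X) (eY : rel Y) (f : X -> Y),
      simple_graph eX -> simple_graph eY ->
      connected_graph eX -> connected_graph eY ->
      deg_bounded eX D -> deg_bounded eY D ->
      (forall S : {set X}, ~ (small alpha S /\ folner eX eps S)) ->
      quasi_isometry eX eY L A f ->
      forall S : {set Y}, ~ (small beta S /\ folner eY eta S).
Proof.
move=> eps_gt0 alpha_gt0 _ L_gt0 _.
pose k : R := (ball_bound (Num.truncn D) (qi_fibre_radius L A) (Num.truncn A))%:R.
have k_gt0 : 0 < k by rewrite ltr0n expn_gt0.
have two_gt0 : 0 < 2 :> R by [].
have [eta eta_gt0 [eta_eps eta_le1]] :=
  exists_pos_mul_le (mulr_gt0 two_gt0 (exprn_gt0 3 k_gt0)) eps_gt0 ltr01.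
have [beta beta_gt0 [beta_alpha beta_half]] :=
  exists_pos_mul_le (exprn_gt0 2 k_gt0) alpha_gt0 (divr_gt0 ltr01 two_gt0).
exists eta, beta; split=> //; split=> // X Y eX eY f [symX _] [symY _] connX connY.
move=> degX degY noFX qi S FS; apply: (noFX (f @^-1: S)).
have degX' x := leq_truncn (degX x); have degY' y := leq_truncn (degY y).
exact: (folner_preimage symX symY connX connY degX' degY' (qi_edge L_gt0 qi)
  (qi_proper L_gt0 qi) (qi_dense qi) (ltW eta_gt0) (ltW beta_gt0)
  eta_eps eta_le1 beta_alpha beta_half FS).
Qed.
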